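(* Let $G_{\|v_0}$ be an initialized Borel game, let $\lambda$ be a requirement on $G$ and let $i\in\Pi$. Then the abstract negotiation game $\mathrm{Abs}_{\lambda i}(G)_{\|[v_0]}$ satisfies $$\inf_{\tau_\mathbb{P}}\ \sup_{\tau_\mathbb{C}}\ \nu_\mathbb{C}\big(\langle\tau_\mathbb{P},\tau_\mathbb{C}\rangle_{[v_0]}\big)=\inf_{\bar\sigma_{-i}\in\lambda\mathrm{Rat}_i(v_0)}\ \sup_{\sigma_i}\ \mu_i\big(\langle\bar\sigma_{-i},\sigma_i\rangle_{v_0}\big).$$
   Context: A game is a tuple $G=(\Pi,V,(V_i)_{i\in\Pi},E,\mu)$ where $\Pi$ is a finite set of players, $(V,E)$ is a finite directed graph in which every vertex has at least one outgoing edge, $(V_i)_{i\in\Pi}$ is a partition of $V$, and $\mu:V^\omega\to\mathbb{R}^\Pi$ is the outcome function; $G$ is Borel if $\mu$ is Borel measurable ($V^\omega$ with the product topology). Plays, histories, strategies, profiles, compatibility and $\langle\bar\sigma\rangle_v$ are as usual; $-i=\Pi\setminus\{i\}$; $\bar\sigma_{\|hw}$ is the profile with $\sigma_{j\|hw}(h')=\sigma_j(hh')$. A requirement is a map $\lambda:V\to\mathbb{R}\cup\{\pm\infty\}$. A play $\rho$ is $\lambda$-consistent if for every $j\in\Pi$ and $n$ with $\rho_n\in V_j$, $\mu_j(\rho_n\rho_{n+1}\cdots)\ge\lambda(\rho_n)$. $\lambda\mathrm{Rat}_i(v)$ is the set of profiles $\bar\sigma_{-i}$ in $G_{\|v}$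 for which there exists $\sigma_i$ such that for every history $hw$ from $v$ compatible with $\bar\sigma_{-i}$, $\langle\bar\sigma_{\|hw}\rangle_w$ is $\lambda$-consistent; $\inf\emptyset=+\infty$. The abstract negotiation game $\mathrm{Abs}_{\lambda i}(G)_{\|[v_0]}$ is a two-player zero-sum game between Prover $\mathbb{P}$ and Challenger $\mathbb{C}$. Challenger's states are $[\rho]$ for $\rho$ a $\lambda$-consistent play of $G$. Prover's states are $[hv]$ for $hv$ a history of $G$ with $h$ ending in $V_i$, states $[v]$ for $v\in V$, and two extra states $\top,\bot$. The initial state is $[v_0]$. Transitions: $[hv]\to[v\rho]$ whenever $v\rho$ is a $\lambda$-consistent play starting at $v$ (Prover proposes a play); $[\rho]\to[\rho_0\cdots\rho_nv]$ whenever $\rho_n\in V_i$, $\rho_nv\in E$ and $v\neq\rho_{n+1}$ (Challenger makes player $i$ deviate); $[\rho]\to\top$ (Challenger accepts); $[hv]\to\bot$ for every Prover state $[hv]$ or $[v]$; and self-loops $\top\to\top$, $\bot\to\bot$. Writing a play of this game as $[v_0][\rho^{(0)}][h^{(1)}v_1][\rho^{(1)}]\cdots$, where each $h^{(k)}v_k$ is the Prover state reached after the $k$-th deviation (so $h^{(k)}$ is the prefix of $\rho^{(k-1)}$ up to the deviation vertex), the outcome for Challenger is: $\nu_\mathbb{C}([v_0][\rho^{(0)}][h^{(1)}v_1][\rho^{(1)}]\cdots[h^{(k)}v_k][\rho^{(k)}]\top^\omega)=\mu_i(h^{(1)}\cdots h^{(k)}\rho^{(k)})$; $\nu_\mathbb{C}([v_0][\rho^{(0)}][h^{(1)}v_1][\rho^{(1)}]\cdots)=\mu_i(h^{(1)}h^{(2)}\cdots)$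 for plays with infinitely many deviations; $\nu_\mathbb{C}(H\bot^\omega)=+\infty$; and $\nu_\mathbb{P}=-\nu_\mathbb{C}$. $\langle\tau_\mathbb{P},\tau_\mathbb{C}\rangle_{[v_0]}$ is the play generated by strategies $\tau_\mathbb{P},\tau_\mathbb{C}$. *)

From HB Require Import structures.
From mathcomp Require Import all_boot all_order all_algebra.
From mathcomp Require Import all_classical all_reals.
From mathcomp Require Import ereal topology normedtype measure.
Import numFieldNormedType.Exports.
Set Implicit Arguments. Unset Strict Implicit. Unset Printing Implicit Defensive.
Import Order.TTheory GRing.Theory Num.Theory.
Local Open Scope classical_set_scope.
Local Open Scope ring_scope.

(* Open sets of the product topology on V^omega = nat -> V, V discrete:
   a set is open iff around each of its points it contains a basic
   cylinder (all sequences sharing a finite prefix). *)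
Definition prod_open (V : Type) (U : set (nat -> V)) : Prop :=
  forall rho, U rho -> exists n : nat,
    forall rho', (forall m, (m < n)%N -> rho' m = rho m) -> U rho'.

Definition borel_omega (V : Type) : set (set (nat -> V)) :=
  <<s [set U | prod_open U] >>.

Definition borel_R (R : realType) : set (set R) :=
  <<s [set U : set R | open U] >>.

(* mu : V^omega -> R^Pi is Borel measurable (Pi finite, so coordinatewise). *)
Definition borel_outcome (R : realType) (Pi : finType) (V : Type)
  (mu : (nat -> V) -> Pi -> R) : Prop :=
  forall (j : Pi) (B : set R), borel_R B ->
    borel_omega ((fun rho => mu rho j) @^-1` B).

Lemma ex_asbool (P : nat -> Prop) : (exists k, P k) -> exists k, `[< P k >].
Proof. by move=> [k Hk]; exists k; apply/asboolP. Qed.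

Section Games.
Context (R : realType) (Pi V : finType) (owner : V -> Pi) (E : rel V)
        (mu : (nat -> V) -> Pi -> R) (lam : V -> \bar R).

Definition is_play (rho : nat -> V) : Prop := forall n, E (rho n) (rho n.+1).

Definition suffix (rho : nat -> V) (n : nat) : nat -> V := fun m => rho (n + m).

Definition lam_consistent (rho : nat -> V) : Prop :=
  forall n, (lam (rho n) <= (mu (suffix rho n) (owner (rho n)))%:E)%E.

(* histories are non-empty finite paths  x :: s  with  path E x s;
   a strategy of player j maps every history ending in V_j to a successor *)
Definition strategy (j : Pi) (sigma : seq V -> V) : Prop :=
  forall x s, path E x s -> owner (last x s) = j ->
    E (last x s) (sigma (x :: s)).

Definition profile := Pi -> seq V -> V.

Fixpoint gpref (tau : profile) (v : V) (n : nat) : seq V :=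
  match n with
  | 0 => [:: v]
  | n'.+1 => let s := gpref tau v n' in
             rcons s (tau (owner (last v s)) s)
  end.

Definition gplay (tau : profile) (v : V) : nat -> V :=
  fun n => last v (gpref tau v n).

Definition upd (i : Pi) (sig : profile) (sigi : seq V -> V) : profile :=
  fun j => if j == i then sigi else sig j.

Definition shift_prof (tau : profile) (h : seq V) : profile :=
  fun j h' => tau j (h ++ h').

Definition compat_minus (i : Pi) (sig : profile) (x : V) (s : seq V) : Prop :=
  forall m, (m < size s)%N ->
    let l := x :: s in
    owner (nth x l m) != i ->
    nth x l m.+1 = sig (owner (nth x l m)) (take m.+1 l).

(* lambda Rat_i(v): the profiles sigma_{-i} (components j <> i are strategies;
   the i-component of the representing family is irrelevant) such that some
   strategy sigma_i of player i makes every continuation <sigma_{|hw}>_w, hw a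
   history from v compatible with sigma_{-i}, lambda-consistent. *)
Definition lamRat (i : Pi) (v : V) : set profile :=
  [set sig | (forall j, j != i -> strategy j (sig j)) /\
     exists sigi, strategy i sigi /\
       forall x s, x = v -> path E x s -> compat_minus i sig x s ->
         lam_consistent (gplay (shift_prof (upd i sig sigi) (belast x s))
                               (last x s))].

(* states: [rho] (Challenger), [h v] (Prover; [v] is PState [::] v),
   top and bottom *)
Inductive astate :=
  | CState of (nat -> V)
  | PState of seq V & V
  | Top
  | Bot.

Definition isC (s : astate) : bool := if s is CState _ then true else false.

Definition atrans (i : Pi) (s t : astate) : Prop :=
  match s, t with
  | PState _ v, CState rho => rho 0 = v /\ is_play rho /\ lam_consistent rho
  | PState _ _, Bot => True
  | CState rho, PState h v =>
      exists n, h = mkseq rho n.+1 /\ owner (rho n) = i /\ E (rho n) v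
                /\ v != rho n.+1
  | CState _, Top => True
  | Top, Top => True
  | Bot, Bot => True
  | _, _ => False
  end.

Fixpoint apath (i : Pi) (x : astate) (s : seq astate) : Prop :=
  match s with
  | [::] => True
  | y :: s' => atrans i x y /\ apath i y s'
  end.

(* strategies of Prover (P = true) and Challenger (P = false) *)
Definition astrategy (i : Pi) (P : bool) (tau : seq astate -> astate) : Prop :=
  forall x s, apath i x s -> isC (last x s) = ~~ P ->
    atrans i (last x s) (tau (x :: s)).

Fixpoint apref (tauP tauC : seq astate -> astate) (init : astate) (n : nat)
  : seq astate :=
  match n with
  | 0 => [:: init]
  | n'.+1 => let s := apref tauP tauC init n' in
             rcons s (if isC (last init s) then tauC s else tauP s)
  end.

Definition aplay (tauP tauC : seq astate -> astate) (v0 : V) : nat -> astate :=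
  fun n => let init := PState [::] v0 in last init (apref tauP tauC init n).

Definition hc (s : astate) : seq V := if s is PState h _ then h else [::].
Definition rc (v0 : V) (s : astate) : nat -> V :=
  if s is CState rho then rho else fun _ => v0.

Definition catplay (s : seq V) (rho : nat -> V) : nat -> V :=
  fun m => if (m < size s)%N then nth (rho 0) s m else rho (m - size s)%N.

(* infinite concatenation  hs 0 hs 1 hs 2 ...  (meaningful when all
   hs k are non-empty, which is the case for the h^(k), k >= 1) *)
Definition iconcat (v0 : V) (hs : nat -> seq V) : nat -> V :=
  fun m => nth v0 (flatten [seq hs k | k <- iota 0 m.+1]) m.

(* Challenger's outcome.  A play is written
   [v0][rho^(0)][h^(1)v1][rho^(1)]...: position 2k is [h^(k) v_k],
   position 2k+1 is [rho^(k)]. *)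
Definition nuC (i : Pi) (v0 : V) (p : nat -> astate) : \bar R :=
  match pselect (exists n, p n = Bot) with
  | left _ => +oo%E
  | right _ =>
    match pselect (exists k, p (k.*2.+2) = Top) with
    | left H =>
        let k := ex_minn (ex_asbool H) in
        (mu (catplay (flatten [seq hc (p (j.*2)) | j <- iota 1 k])
                     (rc v0 (p (k.*2.+1)))) i)%:E
    | right _ =>
        (mu (iconcat v0 (fun j => hc (p (j.+1.*2)))) i)%:E
    end
  end.

End Games.

From Pilot Require Import Defs.
From HB Require Import structures.
From mathcomp Require Import all_boot all_order all_algebra.
From mathcomp Require Import all_classical all_reals.
From mathcomp Require Import ereal topology normedtype measure.
Import numFieldNormedType.Exports.
Import Order.TTheory GRing.Theory Num.Theory.
Local Open Scope classical_set_scope.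
Set Implicit Arguments. Unset Strict Implicit. Unset Printing Implicit Defensive.

(* (<=) Let sigma_{-i} be in lambda Rat_i(v0), witnessed by sigma_i^0.  Prover
   answers each state [h v] by the play of (sigma_{-i}, sigma_i^0) continued
   after the history h v.  Every history met along the abstract play is
   compatible with sigma_{-i}, so these proposals are lambda-consistent and
   bottom is never reached.  The outcome play h^(1) h^(2) ... (rho^(k)) read
   off the abstract play is then compatible with sigma_{-i}; hence it is
   generated by a strategy sigma_i, and nu_C is its payoff for player i.

   (>=) Let tau_P be a Prover strategy.  If some Challenger strategy reaches
   bottom, Challenger's supremum is +oo.  Otherwise the players j <> i replay
   tau_P along the history ("tracking" the abstract game) and follow the
   current proposal.  This profile lies in lambda Rat_i(v0), and the play of
   any sigma_i against it is the outcome of the abstract play in which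
   Challenger deviates exactly where sigma_i leaves the current proposal. *)

(* [Defs.suffix] is hidden by [seq.suffix]. *)
Notation gsuffix := Defs.suffix.

#[local] Arguments Top {V}.
#[local] Arguments Bot {V}.

Lemma last_mkseq (T : Type) (x0 : T) (f : nat -> T) n :
  last x0 (mkseq f n.+1) = f n.
Proof. by rewrite mkseqS last_rcons. Qed.

Lemma mkseq_add (T : Type) (f : nat -> T) a b :
  mkseq f (a + b) = mkseq f a ++ mkseq (fun j => f (a + j)) b.
Proof.
elim: b => [|b IH]; first by rewrite addn0 cats0.
by rewrite addnS !mkseqS IH rcons_cat.
Qed.

Lemma eq_mkseq_lt (T : Type) (f g : nat -> T) n :
  (forall j, (j < n)%N -> f j = g j) -> mkseq f n = mkseq g n.
Proof.
elim: n => [|n IH] H //.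
by rewrite !mkseqS IH ?H // => j Hj; apply: H; apply: ltnW.
Qed.

Lemma mkseq_size_inj (T : Type) (f : nat -> T) d d' :
  mkseq f d.+1 = mkseq f d'.+1 -> d = d'.
Proof. by move/(congr1 size); rewrite !size_mkseq => -[]. Qed.

Lemma size_lt_cat_mkseq (T : Type) (s t : seq T) (f : nat -> T) d n : n <= d ->
  size s + n < size (s ++ mkseq f d.+1 ++ t).
Proof. by move=> Hn; rewrite !size_cat size_mkseq ltn_add2l addSn ltnS (leq_trans Hn) ?leq_addr. Qed.

Lemma nth_cat_mkseq (T : Type) (x : T) (s t : seq T) (f : nat -> T) d n : n <= d ->
  nth x (s ++ mkseq f d.+1 ++ t) (size s + n) = f n.
Proof.
by move=> Hn; rewrite nth_cat ltnNge leq_addr addKn nth_cat size_mkseq ltnS Hn nth_mkseq.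
Qed.

Section Negotiation.
Context (R : realType) (Pi V : finType) (owner : V -> Pi) (E : rel V)
  (mu : (nat -> V) -> Pi -> R) (lam : V -> \bar R) (i : Pi) (v0 : V).

Lemma gpref_mkseq (tau : profile Pi V) v n :
  gpref owner tau v n = mkseq (gplay owner tau v) n.+1.
Proof.
elim: n => [|n IH] //=.
by rewrite mkseqS -IH /gplay /= last_rcons.
Qed.

Lemma gplayS (tau : profile Pi V) v n :
  gplay owner tau v n.+1 =
  tau (owner (gplay owner tau v n)) (mkseq (gplay owner tau v) n.+1).
Proof. by rewrite {1}/gplay /= last_rcons -gpref_mkseq. Qed.

Lemma continuation_history (tau : profile Pi V)
  (Hs : forall j, strategy owner E j (tau j)) x s : path E x s ->
  forall n, exists s', belast x s ++
     mkseq (gplay owner (shift_prof tau (belast x s)) (last x s)) n.+1 = x :: s'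
     /\ path E x s'.
Proof.
move=> Hp; set g := gplay _ _ _.
elim=> [|n [s' [Hs' Hp']]].
  by exists s; rewrite (_ : mkseq g 1 = [:: last x s]) // cats1 -lastI.
exists (rcons s' (g n.+1)); split.
  by rewrite mkseqS -rcons_cat Hs'.
rewrite rcons_path Hp' /=.
have Hl : last x s' = g n.
  by have := congr1 (last x) Hs'; rewrite /= last_cat last_mkseq.
rewrite Hl /g gplayS /shift_prof -/g Hs' -Hl.
by apply: Hs => //; rewrite Hl.
Qed.

Lemma continuation_is_play (tau : profile Pi V)
  (Hs : forall j, strategy owner E j (tau j)) x s : path E x s ->
  is_play E (gplay owner (shift_prof tau (belast x s)) (last x s)).
Proof.
move=> Hp n; set g := gplay _ _ _.
have [s' [Hs' Hp']] := continuation_history Hs Hp n.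
have Hl : last x s' = g n.
  by have := congr1 (last x) Hs'; rewrite /= last_cat last_mkseq.
rewrite /g gplayS /shift_prof -/g Hs' -Hl.
by apply: Hs => //; rewrite Hl.
Qed.

Lemma lam_consistent_suffix rho n : lam_consistent owner mu lam rho ->
  lam_consistent owner mu lam (gsuffix rho n).
Proof.
move=> H m.
have -> : gsuffix (gsuffix rho n) m = gsuffix rho (n + m).
  by apply: funext => k; rewrite /Defs.suffix; congr rho; exact: addnA.
exact: H.
Qed.

Context (Etot : forall v, exists w, E v w).

Definition succ (v : V) : V := odflt v [pick w | E v w].

Lemma succP v : E v (succ v).
Proof.
rewrite /succ; case: pickP => [w Hw //|H].
by have [w Hw] := Etot v; rewrite H in Hw.
Qed.

Lemma play_realized (sig : profile Pi V) (pi : nat -> V) :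
  is_play E pi ->
  (forall m, owner (pi m) != i -> pi m.+1 = sig (owner (pi m)) (mkseq pi m.+1)) ->
  exists sigi, strategy owner E i sigi /\ gplay owner (upd i sig sigi) (pi 0) = pi.
Proof.
move=> Hpl Hc.
pose sigi (h : seq V) := if h == mkseq pi (size h) then pi (size h)
                         else succ (last (pi 0) h).
exists sigi; split.
  move=> x s Hp Ho; rewrite /sigi.
  case: eqP => [He|_]; last exact: succP.
  have -> : last x s = pi (size s).
    by have := congr1 (last x) He; rewrite (_ : size (x :: s) = (size s).+1) // last_mkseq.
  exact: Hpl.
set g := gplay _ _ _.
have Hm : forall n, mkseq g n = mkseq pi n.
  elim=> [//|n IH].
  rewrite !mkseqS IH; congr rcons.
  case: n IH => [|n] IH //.
  have Hgn : g n = pi n.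
    by have := congr1 (nth v0 ^~ n) IH; rewrite !nth_mkseq.
  rewrite /g gplayS -/g IH Hgn /upd.
  case: eqP => [Ho|/eqP Ho]; last by rewrite -Hc.
  by rewrite /sigi size_mkseq eqxx.
apply: funext => n.
by have := congr1 (nth v0 ^~ n) (Hm n.+1); rewrite !nth_mkseq.
Qed.

Lemma history_realized (sig : profile Pi V) s :
  path E v0 s -> compat_minus owner i sig v0 s ->
  exists2 sigi, strategy owner E i sigi &
    mkseq (gplay owner (upd i sig sigi) v0) (size s).+1 = v0 :: s.
Proof.
move=> Hp Hc; set L := v0 :: s.
pose sigi (h : seq V) := if (size h < size L) && (h == take (size h) L)
                         then nth v0 L (size h) else succ (last v0 h).
have Hsigi : strategy owner E i sigi.
  move=> y t _ _; rewrite /sigi.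
  case: ifP => [/andP [Hsz /eqP Hh]|_]; last exact: succP.
  have Hl : last y t = nth v0 L (size t).
    have := congr1 (last v0) Hh.
    rewrite (_ : size (y :: t) = (size t).+1) // (take_nth v0) ?last_rcons //.
    by rewrite /= ltnS ltnW.
  by rewrite Hl; apply: (pathP v0 Hp); rewrite /= !ltnS in Hsz.
exists sigi => //; set pi := gplay _ _ _.
have Hpre : forall j, j <= size s -> mkseq pi j.+1 = take j.+1 L.
  elim=> [_|j IH Hj]; first by rewrite /L /= take0 /mkseq /= /pi.
  have IH' := IH (ltnW Hj).
  have HjL : j.+1 < size L by rewrite /= ltnS.
  rewrite mkseqS IH' [RHS](take_nth v0) //; congr rcons.
  have Hpj : pi j = nth v0 L j.
    by have := congr1 (last v0) IH'; rewrite last_mkseq (take_nth v0) ?last_rcons // ltnW.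
  rewrite /pi gplayS -/pi IH' Hpj /upd.
  case: eqP => [Ho|/eqP Ho]; last by symmetry; apply: (Hc j Hj Ho).
  by rewrite /sigi size_takel ?HjL ?eqxx // ltnW.
by rewrite Hpre // (_ : (size s).+1 = size L) // take_size.
Qed.

Definition compat_hist (sig : profile Pi V) (L : seq V) :=
  exists s, L = v0 :: s /\ path E v0 s /\ compat_minus owner i sig v0 s.

Lemma compat_hist_rcons sig L y : compat_hist sig L -> E (last v0 L) y ->
  (owner (last v0 L) != i -> y = sig (owner (last v0 L)) L) ->
  compat_hist sig (rcons L y).
Proof.
move=> [s [-> [Hp Hc]]] /= HE Hy.
exists (rcons s y); split => //; split.
  by rewrite rcons_path Hp HE.
move=> m; rewrite size_rcons ltnS leq_eqVlt => /orP [/eqP ->|Hm] /=.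
  rewrite -rcons_cons !nth_rcons /= ltnSn ltnn eqxx.
  have Hl : nth v0 (v0 :: s) (size s) = last v0 s.
    by rewrite (_ : size s = (size (v0 :: s)).-1) // nth_last.
  by rewrite Hl -cats1 take_size_cat // => /Hy.
have H1 : m < (size s).+1 by rewrite ltnS ltnW.
rewrite -rcons_cons !nth_rcons /= H1 Hm -cats1 takel_cat; last exact: ltnW.
exact: Hc.
Qed.

Local Notation atr := (atrans owner E mu lam i).
Local Notation ap := (apath owner E mu lam i).
Local Notation astr := (astrategy owner E mu lam i).
Local Notation init := (PState [::] v0).

Lemma apath_rcons x s y : ap x (rcons s y) <-> ap x s /\ atr (last x s) y.
Proof.
elim: s x => [|z s IH] x /=; first by split => [[]|[]].
rewrite IH; tauto.
Qed.

Definition notP (s : astate V) := if s is PState _ _ then false else true.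

Lemma hc_notP s : notP s -> hc s = [::].
Proof. by case: s. Qed.

Lemma atr_toP s h u : atr s (PState h u) ->
  exists rho, s = CState rho /\ exists n, h = mkseq rho n.+1 /\ owner (rho n) = i
    /\ E (rho n) u /\ u != rho n.+1.
Proof. by case: s => // rho H; exists rho. Qed.

Lemma atr_toC s rho : atr s (CState rho) ->
  exists h, s = PState h (rho 0) /\ is_play E rho /\ lam_consistent owner mu lam rho.
Proof. by case: s => // h v [<- H]; exists h. Qed.

Lemma atr_fromC rho t : atr (CState rho) t -> t = Top \/
  exists n u, t = PState (mkseq rho n.+1) u /\ owner (rho n) = i
    /\ E (rho n) u /\ u != rho n.+1.
Proof.
case: t => [r|h v| |] //=; last by left.
by move=> [n [-> H]]; right; exists n, v.
Qed.

Lemma atr_fromP h v t : atr (PState h v) t -> t = Bot \/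
  exists rho, t = CState rho /\ rho 0 = v /\ is_play E rho /\
     lam_consistent owner mu lam rho.
Proof.
case: t => [r|h' v'| |] //=; last by left.
by move=> H; right; exists r.
Qed.

Lemma atr_Top t : atr Top t -> t = Top.
Proof. by case: t. Qed.

Lemma atr_Bot s : atr s Bot -> s = Bot \/ exists h v, s = PState h v.
Proof.
case: s => [r|h v| |] //=; last by left.
by move=> _; right; exists h, v.
Qed.

Lemma PState_inj (h h' : seq V) u u' : PState h u = PState h' u' -> h = h' /\ u = u'.
Proof. by case. Qed.

Section AbsPlay.
Context (tauP tauC : seq (astate V) -> astate V)
  (HP : astr true tauP) (HC : astr false tauC).

Local Notation p := (aplay tauP tauC v0).
Local Notation apr := (apref tauP tauC init).

Lemma apref_last n : last init (apr n) = p n.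
Proof. by []. Qed.

Lemma aprefS n : apr n.+1 =
  rcons (apr n) (if isC (p n) then tauC (apr n) else tauP (apr n)).
Proof. by []. Qed.

Lemma aplayS n : p n.+1 = if isC (p n) then tauC (apr n) else tauP (apr n).
Proof. by rewrite -(apref_last n.+1) aprefS last_rcons. Qed.

Lemma apref_mkseq n : apr n = mkseq p n.+1.
Proof.
elim: n => [|n IH] //.
by rewrite aprefS mkseqS -IH aplayS.
Qed.

Lemma apref_cons n : apr n = init :: behead (apr n).
Proof. by rewrite apref_mkseq mkseqS; case: n. Qed.

Lemma apref_path n : ap init (behead (apr n)).
Proof.
elim: n => [|n IH] //.
have Hc := apref_cons n.
have Hl : last init (behead (apr n)) = p n by rewrite -apref_last {2}Hc.
rewrite aprefS {1}Hc /= apath_rcons; split => //.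
rewrite Hl; move: IH Hl; rewrite Hc /= => IH Hl.
rewrite -Hl; case: ifP => HCp; [exact: HC | exact: HP].
Qed.

Lemma aplay_step n : atr (p n) (p n.+1).
Proof.
have := apref_path n; have Hc := apref_cons n.
rewrite aplayS.
have <- : last init (behead (apr n)) = p n by rewrite -apref_last {2}Hc.
rewrite Hc /= => Hap.
case: ifP => HCp; [exact: HC | exact: HP].
Qed.

Lemma aplay_alternates k : notP (p k.*2.+1) /\ ~~ isC (p k.*2.+2) /\ ~~ isC (p k.*2).
Proof.
elim: k => [|k [IH1 [IH2 IH3]]].
  have H1 : notP (p 1) by have := aplay_step 0; case: (p 1).
  split => //; split => //.
  by have := aplay_step 1; move: H1; case: (p 1) => [r|h v| |] //= _; case: (p 2).
have H1 : notP (p k.+1.*2.+1).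
  by have := aplay_step k.*2.+2; move: IH2; rewrite doubleS;
     case: (p k.*2.+2) => [r|h v| |] //= _; case: (p k.*2.+3).
split => //; split; last by rewrite doubleS.
by have := aplay_step k.+1.*2.+1; move: H1; case: (p k.+1.*2.+1) => [r|h v| |] //= _;
   case: (p k.+1.*2.+2).
Qed.

Lemma aplay_Top_absorbing n m : p n = Top -> n <= m -> p m = Top.
Proof.
move=> Hn; elim: m => [|m IH]; first by rewrite leqn0 => /eqP <-.
rewrite leq_eqVlt => /orP [/eqP <- //|]; rewrite ltnS => /IH Hm.
by have := aplay_step m; rewrite Hm => /atr_Top.
Qed.

(* dev_prefix k = h^(1) ... h^(k): the deviation prefixes of the first k
   deviations, and proposal k = rho^(k). *)
Definition dev_prefix k := flatten [seq hc (p j.*2) | j <- iota 1 k].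
Definition proposal k := rc v0 (p k.*2.+1).

Definition outcome : nat -> V :=
  match pselect (exists k, p (k.*2.+2) = Top) with
  | left H =>
      let k := ex_minn (ex_asbool H) in
      catplay (flatten [seq hc (p (j.*2)) | j <- iota 1 k]) (rc v0 (p (k.*2.+1)))
  | right _ => iconcat v0 (fun j => hc (p (j.+1.*2)))
  end.

Lemma nuC_outcome : (forall n, p n <> Bot) -> nuC mu i v0 p = (mu outcome i)%:E.
Proof.
move=> NB; rewrite /nuC /outcome.
case: pselect => [[n Hn]|_]; first by have := NB n.
by case: pselect.
Qed.

Lemma dev_prefixS k : dev_prefix k.+1 = dev_prefix k ++ hc (p k.+1.*2).
Proof.
rewrite /dev_prefix; have -> : iota 1 k.+1 = iota 1 (k + 1) by rewrite addn1.
by rewrite iotaD map_cat flatten_cat /= cats0 add1n.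
Qed.

Lemma dev_prefix_mono a b : a <= b -> exists t, dev_prefix b = dev_prefix a ++ t.
Proof.
move=> Hab; rewrite -(subnKC Hab) /dev_prefix iotaD map_cat flatten_cat.
by eexists.
Qed.

Lemma dev_prefix_iota0 m : flatten [seq hc (p j.+1.*2) | j <- iota 0 m] = dev_prefix m.
Proof.
rewrite /dev_prefix -[1]/(1 + 0)%N iotaDl -map_comp.
by congr flatten; apply: eq_map => j /=; rewrite add1n.
Qed.

Lemma flatten_hist_even k : flatten (map (@hc V) (apr k.*2)) = dev_prefix k.
Proof.
elim: k => [//|k IH].
rewrite doubleS apref_mkseq 2!mkseqS -apref_mkseq !map_rcons !flatten_rcons IH.
by rewrite (hc_notP (proj1 (aplay_alternates k))) cats0 dev_prefixS doubleS.
Qed.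

Lemma flatten_hist_odd k : flatten (map (@hc V) (apr k.*2.+1)) = dev_prefix k.
Proof.
rewrite apref_mkseq mkseqS -apref_mkseq map_rcons flatten_rcons flatten_hist_even.
by rewrite (hc_notP (proj1 (aplay_alternates k))) cats0.
Qed.

Lemma dev_prefix_dev k rho d u : p k.*2.+2 = PState (mkseq rho d.+1) u ->
  dev_prefix k.+1 = dev_prefix k ++ mkseq rho d.+1.
Proof. by move=> Hp; rewrite dev_prefixS doubleS Hp. Qed.

Lemma after_proposal k rho : p k.*2.+1 = CState rho -> p k.*2.+2 = Top \/
  exists d u, p k.*2.+2 = PState (mkseq rho d.+1) u /\ owner (rho d) = i
    /\ E (rho d) u /\ u != rho d.+1.
Proof. by move=> Hc; have := aplay_step k.*2.+1; rewrite Hc => /atr_fromC. Qed.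

Lemma before_proposal k rho : p k.*2.+1 = CState rho ->
  exists h, p k.*2 = PState h (rho 0) /\ is_play E rho /\ lam_consistent owner mu lam rho.
Proof. by move=> Hc; have := aplay_step k.*2; rewrite Hc => /atr_toC. Qed.

Lemma before_deviation k h u : p k.+1.*2 = PState h u ->
  exists rho, p k.*2.+1 = CState rho /\ exists n, h = mkseq rho n.+1 /\ owner (rho n) = i
    /\ E (rho n) u /\ u != rho n.+1.
Proof. by move=> Hc; have := aplay_step k.*2.+1; rewrite -doubleS Hc => /atr_toP. Qed.

(* covers k n: position n of the proposal rho^(k) belongs to the outcome
   play, i.e. Challenger accepts rho^(k) or deviates from it at some d >= n. *)
Definition covers k n := exists rho, p k.*2.+1 = CState rho /\
  (p k.*2.+2 = Top \/ exists d u, p k.*2.+2 = PState (mkseq rho d.+1) u /\ n <= d).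

Lemma covers_le k n j : covers k n -> j <= n -> covers k j.
Proof.
move=> [rho [Hc [HT|[d [u [Hp Hn]]]]]] Hj; exists rho; split => //; first by left.
by right; exists d, u; split => //; apply: leq_trans Hn.
Qed.

Section NoBot.
Context (NB : forall n, p n <> Bot).

Lemma after_request k h v : p k.*2 = PState h v -> exists rho, p k.*2.+1 = CState rho /\
  rho 0 = v /\ is_play E rho /\ lam_consistent owner mu lam rho.
Proof.
move=> Hp; have := aplay_step k.*2; rewrite Hp => /atr_fromP [Hb|//].
by case: (NB Hb).
Qed.

Lemma covers_start : covers 0 0.
Proof.
have [rho [Hc _]] := after_request (k := 0) (erefl init).
exists rho; split => //.
have [HT|[d [u [Hp _]]]] := after_proposal (k := 0) Hc; first by left.
by right; exists d, u.
Qed.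

Lemma covers_step k n : covers k n -> covers k n.+1 \/
  exists rho d u rho', [/\ p k.*2.+1 = CState rho, p k.*2.+2 = PState (mkseq rho d.+1) u,
    n = d, owner (rho d) = i & E (rho d) u] /\
    [/\ p k.+1.*2.+1 = CState rho', rho' 0 = u, covers k.+1 0 &
        size (dev_prefix k.+1) = (size (dev_prefix k) + n).+1].
Proof.
move=> [rho [Hc [HT|[d [u [Hp Hn]]]]]].
  by left; exists rho; split => //; left.
rewrite leq_eqVlt in Hn; case/orP: Hn => [/eqP Hn|Hn]; last first.
  by left; exists rho; split => //; right; exists d, u.
right.
have [HT|[d' [u' [Hp' [Ho [HE Hne]]]]]] := after_proposal Hc; first by rewrite Hp in HT.
rewrite Hp in Hp'; have [Hm Hu] := PState_inj Hp'; subst u'.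
have Hd := mkseq_size_inj Hm; subst d'.
have Hp2 : p k.+1.*2 = PState (mkseq rho d.+1) u by rewrite doubleS.
have [rho' [Hc' [H0 _]]] := after_request Hp2.
exists rho, d, u, rho'; split => //; split => //.
  exists rho'; split => //.
  have [HT|[d'' [u'' [Hp'' _]]]] := after_proposal Hc'; first by left.
  by right; exists d'', u''.
by rewrite (dev_prefix_dev Hp) size_cat size_mkseq Hn addnS.
Qed.

Lemma cover m : exists k n, covers k n /\ size (dev_prefix k) + n = m.
Proof.
elim: m => [|m [k [n [Hcov Hm]]]]; first by exists 0, 0; split => //; exact: covers_start.
have [H|[rho [d [u [rho' [_ [_ _ Hcov' Hs']]]]]]] := covers_step Hcov.
  by exists k, n.+1; split => //; rewrite addnS Hm.
by exists k.+1, 0; split => //; rewrite addn0 Hs' Hm.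
Qed.

(* Without acceptance, every proposal is followed by a deviation, so the
   deviation prefixes grow at least by one each time. *)
Lemma dev_prefix_size_noTop : ~ (exists k, p (k.*2.+2) = Top) ->
  forall k, k <= size (dev_prefix k) /\ exists rho, p k.*2.+1 = CState rho.
Proof.
move=> HT; elim=> [|k [IH [rho Hc]]].
  by split => //; have [rho [Hc _]] := after_request (k := 0) (erefl init); exists rho.
have [HT'|[d [u [Hp _]]]] := after_proposal Hc; first by case: HT; exists k.
have Hp2 : p k.+1.*2 = PState (mkseq rho d.+1) u by rewrite doubleS.
have [rho' [Hc' _]] := after_request Hp2.
split; last by exists rho'.
by rewrite (dev_prefix_dev Hp) size_cat size_mkseq addnS ltnS (leq_trans IH (leq_addr _ _)).
Qed.

Lemma outcome_covered k n : covers k n -> outcome (size (dev_prefix k) + n) = proposal k n.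
Proof.
move=> Hcov; have [rho [Hc Hrest]] := Hcov.
rewrite /outcome /proposal Hc /=.
case: pselect => [HT|HT].
  case: ex_minnP => K /asboolP HK Hmin; rewrite -/(dev_prefix K).
  have HkK : k <= K.
    rewrite leqNgt; apply/negP => HKk.
    have HKk2 : K.*2.+2 <= k.*2.+1.
      by rewrite -doubleS; apply: leq_trans (leqnSn _); rewrite leq_double.
    by have := aplay_Top_absorbing HK HKk2; rewrite Hc.
  rewrite leq_eqVlt in HkK; case/orP: HkK => [/eqP HkK|HkK].
    by subst K; rewrite /catplay ltnNge leq_addr /= addKn Hc.
  case: Hrest => [HT'|[d [u [Hp Hn]]]].
    by have := Hmin k (asboolT HT'); rewrite leqNgt HkK.
  have [t Ht] := dev_prefix_mono HkK.
  by rewrite /catplay Ht (dev_prefix_dev Hp) -catA size_lt_cat_mkseq //= nth_cat_mkseq.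
have [d [u [Hp Hn]]] : exists d u, p k.*2.+2 = PState (mkseq rho d.+1) u /\ n <= d.
  by case: Hrest => [HT'|//]; case: HT; exists k.
have Hkm : k.+1 <= (size (dev_prefix k) + n).+1.
  by rewrite ltnS (leq_trans (proj1 (dev_prefix_size_noTop HT k))) // leq_addr.
have [t Ht] := dev_prefix_mono Hkm.
by rewrite /iconcat dev_prefix_iota0 Ht (dev_prefix_dev Hp) -catA nth_cat_mkseq.
Qed.

Lemma dev_prefix_outcome k : (exists rho, p k.*2.+1 = CState rho) ->
  dev_prefix k = mkseq outcome (size (dev_prefix k)).
Proof.
elim: k => [//|k IH] [rho' Hc'].
have [h [Hp _]] := before_proposal Hc'.
have [rho [Hc [d [Hh _]]]] := before_deviation Hp.
have Hp2 : p k.*2.+2 = PState (mkseq rho d.+1) (rho' 0) by rewrite -doubleS Hp Hh.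
rewrite (dev_prefix_dev Hp2) size_cat size_mkseq mkseq_add -IH; last by exists rho.
congr cat; apply: eq_mkseq_lt => j Hj.
rewrite outcome_covered /proposal ?Hc //.
by exists rho; split => //; right; exists d, (rho' 0).
Qed.

Lemma outcome_prefix k n : covers k n ->
  mkseq outcome (size (dev_prefix k) + n).+1 = dev_prefix k ++ mkseq (proposal k) n.+1.
Proof.
move=> Hcov; have [rho [Hc _]] := Hcov.
rewrite -addnS mkseq_add -dev_prefix_outcome; last by exists rho.
congr cat; apply: eq_mkseq_lt => j Hj.
by rewrite outcome_covered //; apply: covers_le Hcov _.
Qed.

Lemma outcome_is_play : is_play E outcome.
Proof.
move=> m; have [k [n [Hcov <-]]] := cover m.
have [rho [Hc _]] := Hcov; have [_ [_ [Hpl _]]] := before_proposal Hc.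
have [Hcov'|[rho1 [d [u [rho' [[Hc1 _ Hn _ HE] [Hc' H0 Hcov' Hs']]]]]]] := covers_step Hcov.
  by rewrite -addnS !outcome_covered // /proposal Hc; exact: Hpl.
rewrite Hc in Hc1; case: Hc1 => Hr; subst rho1.
by rewrite -Hs' -[size (dev_prefix k.+1)]addn0 !outcome_covered // /proposal Hc Hc' /= H0 Hn.
Qed.

Lemma outcome0 : outcome 0 = v0.
Proof.
have [rho [Hc [H0 _]]] := after_request (k := 0) (erefl init).
by have := outcome_covered covers_start; rewrite /proposal Hc /= H0 => ->.
Qed.

End NoBot.
End AbsPlay.

Definition prover_guarantee (tauP : seq (astate V) -> astate V) : \bar R :=
  ereal_sup [set nuC mu i v0 (aplay tauP tauC v0) | tauC in astr false].

Definition rat_guarantee (sig : profile Pi V) : \bar R :=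
  ereal_sup [set (mu (gplay owner (upd i sig sigi) v0) i)%:E | sigi in strategy owner E i].

Definition bottom_free (tauP : seq (astate V) -> astate V) : Prop :=
  forall tauC, astr false tauC -> forall j, aplay tauP tauC v0 j <> Bot.

Section ProverFollowsProfile.
(* sig_{-i} in lambda Rat_i(v0), witnessed by the strategy sigi0 of player i. *)
Context (sig : profile Pi V) (sigi0 : seq V -> V)
  (Hsig : forall j, j != i -> strategy owner E j (sig j))
  (Hsigi0 : strategy owner E i sigi0)
  (Hrat : forall x s, x = v0 -> path E x s -> compat_minus owner i sig x s ->
     lam_consistent owner mu lam
       (gplay owner (shift_prof (upd i sig sigi0) (belast x s)) (last x s))).

Local Notation tau := (upd i sig sigi0).

Lemma tau_is_strategy j : strategy owner E j (tau j).
Proof. by rewrite /upd; case: eqP => [->|/eqP Hj] //; apply: Hsig. Qed.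

Definition follow_prover (A : seq (astate V)) : astate V :=
  match last init A with
  | PState h v =>
      let rho := gplay owner (shift_prof tau (flatten (map (@hc V) A))) v in
      if pselect (is_play E rho /\ lam_consistent owner mu lam rho)
      then CState rho else Bot
  | CState _ => Top
  | Top => Top
  | Bot => Bot
  end.

Lemma follow_prover_strategy : astr true follow_prover.
Proof.
move=> x s _; rewrite /follow_prover /=.
by case: (last x s) => [r|h v| |] //= _; case: pselect.
Qed.

Section AgainstChallenger.
Context (tauC : seq (astate V) -> astate V) (HC : astr false tauC).

Local Notation p := (aplay follow_prover tauC v0).
Local Notation devp := (dev_prefix follow_prover tauC).
Local Notation outc := (outcome follow_prover tauC).

Lemma follow_proposal k h v : p k.*2 = PState h v ->
  p k.*2.+1 = let rho := gplay owner (shift_prof tau (devp k)) v in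
      if pselect (is_play E rho /\ lam_consistent owner mu lam rho)
      then CState rho else Bot.
Proof.
move=> Hp; rewrite (aplayS follow_prover tauC) Hp /= /follow_prover apref_last Hp.
by rewrite (flatten_hist_even follow_prover_strategy HC).
Qed.

Lemma proposal_follows_tau k h v rho : p k.*2 = PState h v -> p k.*2.+1 = CState rho ->
  forall j, rho j.+1 = tau (owner (rho j)) (devp k ++ mkseq rho j.+1).
Proof.
move=> Hp; rewrite (follow_proposal Hp) /=; case: pselect => // _ [<-] j.
by rewrite gplayS.
Qed.

(* Invariant: the history h^(1)...h^(k) v of a Prover state [h v] is
   compatible with sig_{-i}. *)
Lemma follow_histories_compatible k h v : p k.*2 = PState h v ->
  compat_hist sig (rcons (devp k) v).
Proof.
elim: k h v => [|k IH] h v Hp.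
  by case: Hp => _ <-; exists [::].
have [rho [Hc [d [Hh [Ho [HE Hne]]]]]] := before_deviation follow_prover_strategy HC Hp.
have [h0 [Hp0 [Hpl _]]] := before_proposal follow_prover_strategy HC Hc.
have Hf := proposal_follows_tau Hp0 Hc.
have Hj : forall j, compat_hist sig (devp k ++ mkseq rho j.+1).
  elim=> [|j IHj]; first by rewrite (_ : mkseq rho 1 = [:: rho 0]) // cats1; exact: IH Hp0.
  rewrite mkseqS -rcons_cat; apply: compat_hist_rcons => //.
  - by rewrite last_cat last_mkseq; apply: Hpl.
  - by rewrite last_cat last_mkseq => Hoj; rewrite Hf /upd (negbTE Hoj).
rewrite dev_prefixS Hp Hh /=; apply: compat_hist_rcons => //.
  by rewrite last_cat last_mkseq.
by rewrite last_cat last_mkseq Ho eqxx.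
Qed.

(* Hence, by the definition of lambda Rat, every proposal is a
   lambda-consistent play and bottom is never reached. *)
Lemma follow_no_Bot n : p n <> Bot.
Proof.
elim: n => [//|n IH] Hb.
have := aplay_step follow_prover_strategy HC n; rewrite Hb => /atr_Bot [//|[h [v Hp]]].
have Hn : n = (n./2).*2 + odd n by rewrite addnC odd_double_half.
move: Hb Hp; rewrite Hn; case: (odd n) => /=.
  rewrite addn1 => _ Hp.
  by have := proj1 (aplay_alternates follow_prover_strategy HC n./2); rewrite Hp.
rewrite addn0 => Hb Hp.
have [s [Hs [Hpath Hcomp]]] := follow_histories_compatible Hp.
have [Hh Hv] : devp n./2 = belast v0 s /\ v = last v0 s.
  by have := lastI v0 s; rewrite -Hs => /rcons_inj [-> ->].
move: Hb; rewrite (follow_proposal Hp) /= Hh Hv; case: pselect => // [[]]; split.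
  exact: (continuation_is_play tau_is_strategy Hpath).
exact: Hrat (erefl v0) Hpath Hcomp.
Qed.

Lemma follow_outcome_compatible m : owner (outc m) != i ->
  outc m.+1 = sig (owner (outc m)) (mkseq outc m.+1).
Proof.
have NB := follow_no_Bot.
have HP := follow_prover_strategy.
have [k [n [Hcov <-]]] := cover HP HC NB m.
have [rho [Hc _]] := Hcov.
have [h0 [Hp0 _]] := before_proposal HP HC Hc.
have [Hcov'|[rho1 [d [u [rho' [[Hc1 Hp Hn Ho HE] _]]]]]] := covers_step HP HC NB Hcov.
  move=> Hown; rewrite (outcome_prefix HP HC NB Hcov).
  rewrite -addnS !(outcome_covered HP HC NB) // /proposal Hc /=.
  rewrite (outcome_covered HP HC NB) // /proposal Hc /= in Hown.
  by rewrite (proposal_follows_tau Hp0 Hc) /upd (negbTE Hown).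
rewrite (outcome_covered HP HC NB) // /proposal Hc /=.
rewrite Hc in Hc1; case: Hc1 => Hr; subst rho1.
by rewrite Hn Ho eqxx.
Qed.

Lemma follow_outcome_realized : exists sigi, strategy owner E i sigi /\
  nuC mu i v0 p = (mu (gplay owner (upd i sig sigi) v0) i)%:E.
Proof.
have NB := follow_no_Bot.
have HP := follow_prover_strategy.
have [sigi [Hs Hg]] := play_realized (outcome_is_play HP HC NB) follow_outcome_compatible.
exists sigi; split => //.
by rewrite (nuC_outcome NB) -(outcome0 HP HC NB) Hg.
Qed.

End AgainstChallenger.
End ProverFollowsProfile.

Section ReplayProver.
Context (tauP : seq (astate V) -> astate V) (HP : astr true tauP).

(* Tracking a history of G in the abstract game: the state Some (A, n) means
   that A is the abstract history so far, ending in a proposal [rho], and the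
   history has followed rho up to position n.  A move along rho advances n; a
   move of player i leaving rho is a deviation, answered by tau_P; anything
   else (or a non-proposal answer) loses track (None). *)
Definition track_init : option (seq (astate V) * nat) :=
  let c := tauP [:: init] in if isC c then Some ([:: init; c], 0) else None.

Definition track_step (st : option (seq (astate V) * nat)) (u : V) :
    option (seq (astate V) * nat) :=
  match st with
  | Some (A, n) =>
      match last init A with
      | CState rho =>
          if u == rho n.+1 then Some (A, n.+1)
          else if (owner (rho n) == i) && E (rho n) u then
            let x := PState (mkseq rho n.+1) u in
            let c := tauP (rcons A x) in
            if isC c then Some (rcons (rcons A x) c, 0) else None
          else None
      | _ => None
      end
  | None => None
  end.

Definition track (L : seq V) := foldl track_step track_init (behead L).

Definition replay_move (L : seq V) : V :=
  match track L with
  | Some (A, n) =>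
      match last init A with
      | CState rho => if rho n == last v0 L then rho n.+1 else succ (last v0 L)
      | _ => succ (last v0 L)
      end
  | None => succ (last v0 L)
  end.

Definition track_state (A : seq (astate V)) := exists t rho, A = init :: t /\ ap init t /\
  last init t = CState rho /\ is_play E rho /\ lam_consistent owner mu lam rho.

Lemma deviation_answer A rho n u : track_state A -> last init A = CState rho ->
  owner (rho n) = i -> E (rho n) u -> u != rho n.+1 ->
  atr (PState (mkseq rho n.+1) u) (tauP (rcons A (PState (mkseq rho n.+1) u))) /\
  ap init (rcons (behead A) (PState (mkseq rho n.+1) u)).
Proof.
move=> [t [rho' [-> [Hap [Hl _]]]]] /= Hl' Ho HE Hne.
have Hap' : ap init (rcons t (PState (mkseq rho n.+1) u)).
  by apply/apath_rcons; split => //; rewrite Hl'; exists n.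
split => //.
have := HP Hap'; rewrite last_rcons => H; exact: H.
Qed.

Lemma track_step_follow A n rho : last init A = CState rho ->
  track_step (Some (A, n)) (rho n.+1) = Some (A, n.+1).
Proof. by move=> Hl; rewrite /track_step Hl eqxx. Qed.

Lemma track_step_deviate A n rho u : last init A = CState rho -> u != rho n.+1 ->
  owner (rho n) = i -> E (rho n) u ->
  track_step (Some (A, n)) u =
    if isC (tauP (rcons A (PState (mkseq rho n.+1) u)))
    then Some (rcons (rcons A (PState (mkseq rho n.+1) u))
                     (tauP (rcons A (PState (mkseq rho n.+1) u))), 0)
    else None.
Proof. by move=> Hl Hne Ho HE; rewrite /track_step Hl (negbTE Hne) Ho eqxx HE. Qed.

Lemma track_step_cases A n u A' n' : track_step (Some (A, n)) u = Some (A', n') ->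
  exists rho, last init A = CState rho /\
   ((u = rho n.+1 /\ A' = A /\ n' = n.+1) \/
    (u != rho n.+1 /\ owner (rho n) = i /\ E (rho n) u /\
     A' = rcons (rcons A (PState (mkseq rho n.+1) u))
                (tauP (rcons A (PState (mkseq rho n.+1) u))) /\
     isC (tauP (rcons A (PState (mkseq rho n.+1) u))) /\ n' = 0)).
Proof.
rewrite /track_step; case Hl: (last init A) => [rho| | |] // H.
exists rho; split => //; move: H.
case: eqP => [-> H|/eqP Hne]; first by case: H => <- <-; left.
case: ifP => // /andP [/eqP Ho HE].
case: ifP => // HC H.
by case: H => <- <-; right.
Qed.

Lemma track_init_ok A n : track_init = Some (A, n) -> track_state A.
Proof.
rewrite /track_init; case: ifP => // HC [<- _].
have H := HP (x := init) (s := [::]) I erefl.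
have [Hb|[rho [Hr [_ [Hpl Hlc]]]]] := atr_fromP H; first by rewrite Hb in HC.
exists [:: tauP [:: init]], rho.
split; first by [].
split; first by split.
split; first by rewrite /= Hr.
by split.
Qed.

Lemma track_step_ok st u A' n' : (forall A n, st = Some (A, n) -> track_state A) ->
  track_step st u = Some (A', n') -> track_state A'.
Proof.
case: st => [[A n]|//] Hinv /track_step_cases [rho [Hl [[_ [-> _]]|[Hne [Ho [HE [-> [HC _]]]]]]]].
  exact: Hinv.
have HA := Hinv _ _ erefl.
have [Htr Hap] := deviation_answer HA Hl Ho HE Hne.
have [Hb|[rho' [Hr [_ [Hpl Hlc]]]]] := atr_fromP Htr; first by rewrite Hb in HC.
have [t [rho0 [HAt _]]] := HA.
exists (rcons (rcons t (PState (mkseq rho n.+1) u)) (tauP (rcons A (PState (mkseq rho n.+1) u)))), rho'.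
split; first by rewrite HAt.
split.
  apply/apath_rcons; rewrite last_rcons; split => //.
  by move: Hap; rewrite HAt.
by rewrite last_rcons Hr.
Qed.

Lemma track_ok L A n : track L = Some (A, n) -> track_state A.
Proof.
rewrite /track.
have : forall A n, track_init = Some (A, n) -> track_state A by move=> ? ?; apply: track_init_ok.
elim: (behead L) track_init A n => [|u s IH] st A n Hst //=; first exact: Hst.
apply: IH => A0 n0; exact: track_step_ok.
Qed.

Lemma replay_edge L : E (last v0 L) (replay_move L).
Proof.
rewrite /replay_move; case Ht: (track L) => [[A n]|]; last exact: succP.
have [t [rho [HA [_ [Hl [Hpl _]]]]]] := track_ok Ht.
rewrite HA /= Hl; case: eqP => [<-|_]; [exact: Hpl | exact: succP].
Qed.

Lemma replay_is_strategy j : strategy owner E j replay_move.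
Proof. by move=> x s _ _; apply: (replay_edge (x :: s)). Qed.

Lemma track_rcons L u : L != [::] -> track (rcons L u) = track_step (track L) u.
Proof. by case: L => // x s _; rewrite /track /= foldl_rcons. Qed.

Definition replay_profile : profile Pi V := fun _ => replay_move.

Section AgainstPlayerI.
Context (sigi : seq V -> V) (Hsigi : strategy owner E i sigi).

Local Notation pi := (gplay owner (upd i replay_profile sigi) v0).
Definition track_pi m := track (mkseq pi m.+1).

Lemma pi_profile_is_strategy j : strategy owner E j (upd i replay_profile sigi j).
Proof. by rewrite /upd; case: eqP => [->|_] //; apply: replay_is_strategy. Qed.

Lemma pi_is_play : is_play E pi.
Proof. exact: (continuation_is_play pi_profile_is_strategy (x := v0) (s := [::]) isT). Qed.

Lemma track_piS m : track_pi m.+1 = track_step (track_pi m) (pi m.+1).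
Proof. by rewrite /track_pi mkseqS track_rcons // -size_eq0 size_mkseq. Qed.

Lemma track_pi_None a b : track_pi a = None -> a <= b -> track_pi b = None.
Proof.
move=> Ha; elim: b => [|b IH]; first by rewrite leqn0 => /eqP <-.
rewrite leq_eqVlt => /orP [/eqP <- //|]; rewrite ltnS => /IH Hb.
by rewrite track_piS Hb.
Qed.

Lemma track_pi_spec m A n : track_pi m = Some (A, n) -> exists rho, last init A = CState rho /\
  flatten (map (@hc V) A) ++ mkseq rho n.+1 = mkseq pi m.+1.
Proof.
elim: m A n => [|m IH] A n.
  rewrite /track_pi /track /= /track_init; case: ifP => // HC [<- <-].
  have H := HP (x := init) (s := [::]) I erefl.
  have [Hb|[rho [Hr [H0 _]]]] := atr_fromP H; first by rewrite Hb in HC.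
  exists rho; rewrite /= Hr; split => //.
  by rewrite /mkseq /= H0.
rewrite track_piS; case Hm: (track_pi m) => [[A0 n0]|//].
have [rho [Hl Hr]] := IH _ _ Hm.
move/track_step_cases => [rho' [Hl' H]]; rewrite Hl in Hl'; case: Hl' => Hr'; subst rho'.
case: H => [[Hu [-> ->]]|[Hne [Ho [HE [-> [HC ->]]]]]].
  exists rho; split => //.
  by rewrite mkseqS -rcons_cat Hr -Hu -mkseqS.
have HA := track_ok Hm.
have [Htr _] := deviation_answer HA Hl Ho HE Hne.
have [Hb|[rho' [Hr' [H0 _]]]] := atr_fromP Htr; first by rewrite Hb in HC.
exists rho'; rewrite last_rcons Hr'; split => //.
rewrite !map_rcons !flatten_rcons /= cats0 Hr.
by rewrite (_ : mkseq rho' 1 = [:: rho' 0]) // H0 cats1 [RHS]mkseqS.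
Qed.

Lemma track_pi_last m A n rho : track_pi m = Some (A, n) -> last init A = CState rho -> rho n = pi m.
Proof.
move=> Ht Hl; have [rho' [Hl' Hr]] := track_pi_spec Ht.
rewrite Hl in Hl'; case: Hl' => Hr'; subst rho'.
by have := congr1 (last v0) Hr; rewrite last_cat !last_mkseq.
Qed.

Lemma replay_on_play m A n rho : track_pi m = Some (A, n) -> last init A = CState rho ->
  replay_move (mkseq pi m.+1) = rho n.+1.
Proof.
move=> Ht Hl; rewrite /replay_move -/(track_pi m) Ht Hl last_mkseq (track_pi_last Ht Hl) eqxx.
by [].
Qed.

Lemma track_pi_mono a b A n B n' : track_pi a = Some (A, n) -> track_pi b = Some (B, n') -> a <= b ->
  size A <= size B /\ (B = A -> n' = n + (b - a)).
Proof.
move=> Ha; elim: b B n' => [|b IH] B n'.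
  rewrite leqn0 => Hb /eqP Ha0; subst a; rewrite Ha in Hb; case: Hb => <- <-.
  by split => // _; rewrite addn0.
move=> Hb; rewrite leq_eqVlt => /orP [/eqP Hab|]; first subst a.
  by rewrite Ha in Hb; case: Hb => <- <-; split => // _; rewrite subnn addn0.
rewrite ltnS => Hab.
move: Hb; rewrite track_piS; case Hb0: (track_pi b) => [[B0 n0]|//].
have [IH1 IH2] := IH _ _ Hb0 Hab.
move/track_step_cases => [rho [Hl [[_ [-> ->]]|[_ [_ [_ [-> [_ ->]]]]]]]].
  by split => // /IH2 ->; rewrite subSn // addnS.
rewrite !size_rcons; split; first by rewrite (leq_trans IH1) // leqW.
move=> HB; have := congr1 size HB; rewrite !size_rcons => HB'.
by move: IH1; rewrite -HB' => /ltnW; rewrite ltnn.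
Qed.

(* Challenger mimics sigma_i: in the abstract history A it deviates where pi
   first leaves the proposal tracked with A, and accepts if pi never does. *)
Definition deviates_at (A : seq (astate V)) m := exists n rho, track_pi m = Some (A, n) /\
  last init A = CState rho /\ pi m.+1 != rho n.+1 /\ owner (rho n) = i /\
  E (rho n) (pi m.+1).

Definition mimic (A : seq (astate V)) : astate V :=
  match pselect (exists m, deviates_at A m) with
  | left H =>
      let m := ex_minn (ex_asbool H) in
      match track_pi m with
      | Some (_, n) =>
          match last init A with
          | CState rho => PState (mkseq rho n.+1) (pi m.+1)
          | _ => Top
          end
      | None => Top
      end
  | right _ => Top
  end.

Lemma mimic_strategy : astr false mimic.
Proof.
move=> x s _ HCl; rewrite /mimic.
case: pselect => [H|_]; last by case: (last x s) HCl.
case: ex_minnP => m /asboolP [n [rho [Htr [Hl [Hne [Ho HE]]]]]] _.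
rewrite Htr; move: Hl => /= Hl; rewrite Hl /=.
by exists n.
Qed.

(* A deviation recorded in A happens no earlier than any time at which A is
   the tracked history; in particular it is unique. *)
Lemma deviates_at_first A m1 m2 n2 : deviates_at A m1 -> track_pi m2 = Some (A, n2) -> m2 <= m1.
Proof.
move=> [n [rho [Htr [Hl [Hne [Ho HE]]]]]] Ht2.
rewrite leqNgt; apply/negP => H12.
have := track_piS m1; rewrite Htr (track_step_deviate Hl Hne Ho HE).
case: ifP => _ Hs; last by have := track_pi_None Hs H12; rewrite Ht2.
have [H1 _] := track_pi_mono Hs Ht2 H12.
by move: H1; rewrite !size_rcons ltnNge leqnSn.
Qed.

Lemma mimic_deviates A m n rho : track_pi m = Some (A, n) -> last init A = CState rho ->
  pi m.+1 != rho n.+1 -> owner (rho n) = i -> E (rho n) (pi m.+1) ->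
  mimic A = PState (mkseq rho n.+1) (pi m.+1).
Proof.
move=> Ht Hl Hne Ho HE.
have Hdev : deviates_at A m by exists n, rho.
rewrite /mimic; case: pselect => [H|H]; last by case: H; exists m.
case: ex_minnP => m0 /asboolP Hdev0 Hmin.
have Hm0 : m0 = m.
  apply/eqP; rewrite eqn_leq Hmin ?(deviates_at_first Hdev0 Ht) //.
  exact/asboolP.
by subst m0; rewrite Ht Hl.
Qed.

Local Notation apr := (apref tauP mimic init).

Lemma track_state_size A : track_state A -> 0 < size A.
Proof. by move=> [t [rho [-> _]]]. Qed.

Lemma apref_deviation A m n rho : apr (size A).-1 = A -> track_pi m = Some (A, n) ->
  last init A = CState rho ->
  pi m.+1 != rho n.+1 -> owner (rho n) = i -> E (rho n) (pi m.+1) ->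
  apr (size A) = rcons A (PState (mkseq rho n.+1) (pi m.+1)) /\
  apr (size A).+1 = rcons (rcons A (PState (mkseq rho n.+1) (pi m.+1)))
                          (tauP (rcons A (PState (mkseq rho n.+1) (pi m.+1)))).
Proof.
move=> Ha Ht Hl Hne Ho HE.
have Hs := track_state_size (track_ok Ht).
have H1 : apr (size A) = rcons A (PState (mkseq rho n.+1) (pi m.+1)).
  rewrite -(prednK Hs) aprefS -(apref_last tauP mimic) Ha Hl /=.
  by rewrite (mimic_deviates Ht Hl Hne Ho HE).
split => //.
by rewrite aprefS -(apref_last tauP mimic) H1 last_rcons.
Qed.

Lemma track_pi_apref m A n : track_pi m = Some (A, n) -> apr (size A).-1 = A.
Proof.
elim: m A n => [|m IH] A n.
  by rewrite /track_pi /track /= /track_init; case: ifP => // HC [<- _].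
rewrite track_piS; case Hm: (track_pi m) => [[A0 n0]|//].
move/track_step_cases => [rho [Hl [[_ [-> _]]|[Hne [Ho [HE [-> _]]]]]]].
  exact: IH Hm.
have [_ H2] := apref_deviation (IH _ _ Hm) Hm Hl Hne Ho HE.
by rewrite !size_rcons (_ : (size A0).+2.-1 = (size A0).+1) // H2.
Qed.

Section BottomFree.
Context (NB : bottom_free tauP).

Lemma track_pi_defined m : track_pi m <> None.
Proof.
elim: m => [|m IH].
  rewrite /track_pi /track /= /track_init; case: ifP => // HC _.
  have H := HP (x := init) (s := [::]) I erefl.
  have [Hb|[rho [Hr _]]] := atr_fromP H; last by rewrite Hr in HC.
  by apply: (NB mimic_strategy (j := 1)).
case Hm: (track_pi m) IH => [[A n]|//] _.
have [rho [Hl _]] := track_pi_spec Hm.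
have Hrn := track_pi_last Hm Hl.
rewrite track_piS Hm.
case: (eqVneq (pi m.+1) (rho n.+1)) => [->|Hne]; first by rewrite track_step_follow.
have Ho : owner (rho n) = i.
  apply/eqP; apply: contraNT Hne => Ho.
  rewrite gplayS /upd -Hrn (negbTE Ho) /replay_profile.
  by rewrite (replay_on_play Hm Hl).
have HE : E (rho n) (pi m.+1) by rewrite Hrn; apply: pi_is_play.
rewrite (track_step_deviate Hl Hne Ho HE); case: ifP => // HC _.
have [_ H2] := apref_deviation (track_pi_apref Hm) Hm Hl Hne Ho HE.
have [Htr _] := deviation_answer (track_ok Hm) Hl Ho HE Hne.
have [Hb|[rho' [Hr _]]] := atr_fromP Htr; last by rewrite Hr in HC.
apply: (NB mimic_strategy (j := (size A).+1)).
by rewrite -(apref_last tauP mimic) H2 last_rcons.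
Qed.

Lemma track_pi_on_proposal m A n : track_pi m = Some (A, n) ->
  exists k rho, [/\ apr k.*2.+1 = A, aplay tauP mimic v0 k.*2.+1 = CState rho,
     last init A = CState rho & dev_prefix tauP mimic k ++ mkseq rho n.+1 = mkseq pi m.+1].
Proof.
move=> Hm; have HTA := track_pi_apref Hm.
have [rho [Hl Hr]] := track_pi_spec Hm.
have Hpj : aplay tauP mimic v0 (size A).-1 = CState rho.
  by rewrite -(apref_last tauP mimic) HTA.
have [k Hk] : exists k, (size A).-1 = k.*2.+1.
  exists ((size A).-1)./2.
  have := odd_double_half (size A).-1.
  case Ho: (odd _) => /= Hj; first by rewrite -{1}Hj add1n.
  have := proj2 (proj2 (aplay_alternates HP mimic_strategy ((size A).-1)./2)).
  by rewrite add0n in Hj; rewrite Hj Hpj.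
rewrite Hk in Hpj HTA; exists k, rho; split => //.
by rewrite -(flatten_hist_odd HP mimic_strategy k) HTA.
Qed.

(* Position n of that proposal is on the outcome play: mimic deviates from
   rho^(k), if at all, at a position >= n. *)
Lemma track_pi_covers m A n k rho : track_pi m = Some (A, n) -> apr k.*2.+1 = A ->
  aplay tauP mimic v0 k.*2.+1 = CState rho -> last init A = CState rho ->
  covers tauP mimic k n.
Proof.
move=> Hm HTA Hpj Hl; exists rho; split => //.
rewrite (aplayS tauP mimic) Hpj HTA /= /mimic.
case: pselect => [H|_]; last by left.
case: ex_minnP => m0 /asboolP Hdev _.
have [n0 [rho0 [Htr0 [Hl0 _]]]] := Hdev.
rewrite Htr0 Hl; right; exists n0, (pi m0.+1); split => //.
have [_ H2] := track_pi_mono Hm Htr0 (deviates_at_first Hdev Hm).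
by rewrite (H2 erefl) leq_addr.
Qed.

Lemma mimic_outcome : outcome tauP mimic = pi.
Proof.
apply: funext => m.
case Hm: (track_pi m) (@track_pi_defined m) => [[A n]|//] _.
have [k [rho [HTA Hpj Hl Hr]]] := track_pi_on_proposal Hm.
have Hmn : m = size (dev_prefix tauP mimic k) + n.
  by have := congr1 size Hr; rewrite size_cat !size_mkseq addnS => -[].
have Hcov := track_pi_covers Hm HTA Hpj Hl.
rewrite Hmn (outcome_covered HP mimic_strategy (NB mimic_strategy) Hcov) /proposal Hpj /=.
have := congr1 (nth v0 ^~ m) Hr; rewrite nth_mkseq // Hmn.
by rewrite (nth_cat _ (dev_prefix tauP mimic k)) ltnNge leq_addr /= addKn nth_mkseq.
Qed.

Lemma mimic_value : nuC mu i v0 (aplay tauP mimic v0) = (mu pi i)%:E.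
Proof. by rewrite (nuC_outcome (NB mimic_strategy)) mimic_outcome. Qed.

End BottomFree.
End AgainstPlayerI.

Lemma replay_continuation s A n rho : track (v0 :: s) = Some (A, n) ->
  last init A = CState rho -> rho n = last v0 s ->
  gplay owner (shift_prof (upd i replay_profile replay_move) (belast v0 s)) (last v0 s)
  = gsuffix rho n.
Proof.
move=> HtL Hl Hrn; set g := gplay _ _ _.
have Hg : forall j, track (belast v0 s ++ mkseq g j.+1) = Some (A, n + j) /\
                    g j = rho (n + j).
  elim=> [|j [IHt IHg]].
    have -> : belast v0 s ++ mkseq g 1 = v0 :: s.
      by rewrite (_ : mkseq g 1 = [:: last v0 s]) // cats1 -lastI.
    by rewrite HtL addn0 Hrn.
  have Hgs : g j.+1 = rho (n + j).+1.
    rewrite /g gplayS -/g /shift_prof /upd.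
    have -> : (if owner (g j) == i then replay_move
               else replay_profile (owner (g j))) = replay_move by case: eqP.
    by rewrite /replay_move IHt Hl last_cat last_mkseq IHg eqxx.
  split; last by rewrite Hgs addnS.
  rewrite mkseqS -rcons_cat track_rcons; last first.
    by rewrite -size_eq0 size_cat size_mkseq addnS.
  by rewrite IHt Hgs addnS track_step_follow.
by apply: funext => j; exact: (proj2 (Hg j)).
Qed.

(* If tau_P is bottom-free, the replaying profile is in lambda Rat_i(v0),
   with replay_move itself as the witness for player i. *)
Lemma replay_in_rat : bottom_free tauP -> lamRat owner E mu lam i v0 replay_profile.
Proof.
move=> NB; split=> [j _|]; first exact: replay_is_strategy.
exists replay_move; split; first exact: replay_is_strategy.
move=> x s -> Hp Hc.
have [sigi Hsigi Hfull] := history_realized Hp Hc.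
case Ht: (track_pi sigi (size s)) (track_pi_defined Hsigi NB (m := size s)) => [[A n]|//] _.
have [rho [Hl _]] := track_pi_spec Ht.
have HtL : track (v0 :: s) = Some (A, n) by rewrite -Hfull.
have Hlc : lam_consistent owner mu lam rho.
  have [t [rho' [HA [_ [Hl' [_ Hlc]]]]]] := track_ok HtL.
  by move: Hl; rewrite HA /= Hl' => -[<-].
rewrite (replay_continuation HtL Hl); first exact: lam_consistent_suffix.
by rewrite (track_pi_last Ht Hl); have := congr1 (last v0) Hfull; rewrite last_mkseq.
Qed.

Lemma rat_value_le :
  (ereal_inf [set rat_guarantee sig | sig in lamRat owner E mu lam i v0]
   <= prover_guarantee tauP)%E.
Proof.
have [NB|NNB] := pselect (bottom_free tauP).
  apply: (@le_trans _ _ (rat_guarantee replay_profile)).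
    by apply: ereal_inf_lbound; exists replay_profile => //; exact: replay_in_rat.
  apply: ge_ereal_sup => _ [sigi Hsigi <-].
  rewrite -(mimic_value Hsigi NB); apply: ereal_sup_ubound.
  by exists (mimic sigi) => //; exact: mimic_strategy.
have [tauC [HC [j Hj]]] : exists tauC, astr false tauC /\ exists j, aplay tauP tauC v0 j = Bot.
  apply: contrapT => H; apply: NNB => tauC HC j Hj; apply: H.
  by exists tauC; split => //; exists j.
have Hnu : nuC mu i v0 (aplay tauP tauC v0) = +oo%E.
  by rewrite /nuC; case: pselect => // -[]; exists j.
apply: (le_trans (leey _)); rewrite -Hnu.
by apply: ereal_sup_ubound; exists tauC.
Qed.

End ReplayProver.

Lemma prover_value_le sig : lamRat owner E mu lam i v0 sig ->
  (ereal_inf [set prover_guarantee tauP | tauP in astr true] <= rat_guarantee sig)%E.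
Proof.
move=> [Hsig [sigi0 [Hsigi0 Hrat]]].
apply: (@le_trans _ _ (prover_guarantee (follow_prover sig sigi0))).
  by apply: ereal_inf_lbound; exists (follow_prover sig sigi0) => //; exact: follow_prover_strategy.
apply: ge_ereal_sup => _ [tauC HC <-].
have [sigi [Hs ->]] := follow_outcome_realized Hsig Hsigi0 Hrat HC.
by apply: ereal_sup_ubound; exists sigi.
Qed.

End Negotiation.

Unset Implicit Arguments.
Local Open Scope ring_scope.

Theorem mainTheorem7 (R : realType) (Pi V : finType) (owner : V -> Pi)
  (E : rel V) (mu : (nat -> V) -> Pi -> R) (lam : V -> \bar R)
  (i : Pi) (v0 : V) :
  (forall v, exists w, E v w) ->
  borel_outcome mu ->
  ereal_inf [set ereal_sup [set nuC mu i v0 (aplay tauP tauC v0)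
                           | tauC in astrategy owner E mu lam i false]
            | tauP in astrategy owner E mu lam i true]
  = ereal_inf [set ereal_sup [set (mu (gplay owner (upd i sig sigi) v0) i)%:E
                             | sigi in strategy owner E i]
              | sig in lamRat owner E mu lam i v0].
Proof.
move=> Etot _; apply/eqP; rewrite eq_le; apply/andP; split.
- by apply: le_ereal_inf_tmp => _ [sig Hsig <-]; exact: (prover_value_le Etot Hsig).
- by apply: le_ereal_inf_tmp => _ [tauP HP <-]; exact: (rat_value_le v0 Etot HP).
Qed.
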